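(* Let $\overrightarrow{W}$ be a Morse sequence on a simplicial complex $K$. (1) The map $\widetilde\curlywedge_p:\widehat W[p]\to\overline O[p]$ is a vector space isomorphism whose inverse is the restriction of $\curlywedge_p$ to $\overline O[p]$. (2) The map $\widetilde\curlyvee_p:\widehat W[p]\to\underline O[p]$ is a vector space isomorphism whose inverse is the restriction of $\curlyvee_p$ to $\underline O[p]$.
   Context: A simplicial complex $K$ is a finite collection of non-empty finite sets closed under taking non-empty subsets; $\dim\sigma=|\sigma|-1$, $K^{(p)}$ the set of $p$-simplices. A pair $(\sigma,\tau)$ with $\sigma\subsetneq\tau$ is a free pair for $K$ if $\tau$ is the only simplex other than $\sigma$ containing $\sigma$; $K$ is then an elementary expansion of $K\setminus\{\sigma,\tau\}$. If $\nu$ is a facet (maximal simplex) of $K$, $K$ is an elementary filling of $K\setminus\{\nu\}$. A Morse sequence on $K$ is a sequence $\langle\emptyset=K_0,\dots,K_k=K\rangle$ with each $K_i$ an elementary expansion or filling of $K_{i-1}$; simplices added by fillings are critical; for an expansion $K_i=K_{i-1}\cup\{\sigma,\tau\}$, $\sigma\subset\tau$, $\sigma$ is lower regular and $\tau$ upper regular. $\widehat W$ is the set of critical simplices. $K[p]$ is the $\mathbb{Z}_2$-vector space of subsets of $K^{(p)}$ (sum = symmetric difference, $0=\emptyset$), $\widehat W[p]=\{c\in K[p]:c\subseteq\widehat W\}$. For $\sigma\in K^{(p)}$, $\partial(\sigma)=\{\tau\in K^{(p-1)}:\tau\subset\sigma\}$, $\delta(\sigma)=\{\tau\in K^{(p+1)}:\sigma\subset\tau\}$.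 The reference map $\curlywedge$ is the unique map assigning to each $p$-simplex an element of $\widehat W[p]$, with linear extension $\curlywedge_p:K[p]\to\widehat W[p]$, such that $\curlywedge(\nu)=\{\nu\}$ for critical $\nu$ and $\curlywedge(\tau)=0=\curlywedge(\partial(\tau))$ for upper regular $\tau$ (with $\partial(\tau)$ viewed as a chain); the coreference map $\curlyvee$ (linear extension $\curlyvee_p$) is the unique such map with $\curlyvee(\nu)=\{\nu\}$ for critical $\nu$ and $\curlyvee(\sigma)=0=\curlyvee(\delta(\sigma))$ for lower regular $\sigma$. The extension and coextension maps are the linear maps $\widetilde\curlywedge_p,\widetilde\curlyvee_p:\widehat W[p]\to K[p]$ with $\widetilde\curlywedge(\kappa)=\{\nu\in K:\kappa\in\curlyvee(\nu)\}$ and $\widetilde\curlyvee(\kappa)=\{\nu\in K:\kappa\in\curlywedge(\nu)\}$ for critical $p$-simplices $\kappa$. $\overline O[p]$ and $\underline O[p]$ denote the images of $\widetilde\curlywedge_p$ and $\widetilde\curlyvee_p$ respectively (subspaces of $K[p]$). *)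

(* Z_2-chains of p-simplices are represented as sets of p-simplices
   (sum = symmetric difference). *)
From mathcomp Require Import all_boot.
Set Implicit Arguments. Unset Strict Implicit. Unset Printing Implicit Defensive.

Section Defs.
Variable V : finType.
Notation simplex := {set V}.
Notation family := {set {set V}}.

Definition is_complex (K : family) : Prop :=
  forall s, s \in K -> s != set0 /\
    (forall t : simplex, t \subset s -> t != set0 -> t \in K).

Definition free_pair (K : family) (s t : simplex) : Prop :=
  [/\ s \proper t, s \in K, t \in K &
      forall r, r \in K -> s \subset r -> r = s \/ r = t].

Definition facet (K : family) (n : simplex) : Prop :=
  n \in K /\ forall r, r \in K -> n \subset r -> r = n.

Inductive step := Fill of simplex | Expand of simplex & simplex.

Definition added (x : step) : family :=
  match x with Fill n => [set n] | Expand s t => [set s; t] end.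

Definition Kof (W : seq step) : family := \bigcup_(x <- W) added x.

Definition morse_step (Kprev : family) (x : step) : Prop :=
  let K := Kprev :|: added x in
  is_complex K /\
  match x with
  | Fill n => n \notin Kprev /\ facet K n
  | Expand s t => [/\ s \notin Kprev, t \notin Kprev & free_pair K s t]
  end.

Definition morse_seq (K : family) (W : seq step) : Prop :=
  (forall i, i < size W -> morse_step (Kof (take i W)) (nth (Fill set0) W i))
  /\ Kof W = K.

Definition critical (W : seq step) : family :=
  \bigcup_(x <- W) (match x with Fill n => [set n] | Expand _ _ => set0 end).
Definition lower_regular (W : seq step) : family :=
  \bigcup_(x <- W) (match x with Fill _ => set0 | Expand s _ => [set s] end).
Definition upper_regular (W : seq step) : family :=
  \bigcup_(x <- W) (match x with Fill _ => set0 | Expand _ t => [set t] end).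

(* K^(p): p-simplices (dim s = |s| - 1) *)
Definition psimplices (K : family) (p : nat) : family :=
  [set s in K | #|s| == p.+1].

(* hat W^(p): critical p-simplices; hat W[p] = chains c ⊆ this set *)
Definition crit_p (W : seq step) (p : nat) : family :=
  [set s in critical W | #|s| == p.+1].

Definition bdry (K : family) (s : simplex) : family :=
  [set t in K | (t \proper s) && (#|t| == #|s|.-1)].
Definition cobdry (K : family) (s : simplex) : family :=
  [set t in K | (s \proper t) && (#|t| == #|s|.+1)].

Definition symdiff (A B : family) : family := (A :\: B) :|: (B :\: A).

(* Z_2-linear extension of a map f on simplices to a chain c:
   f_p(c) = sum_{s in c} f(s) *)
Definition linext (f : simplex -> family) (c : family) : family :=
  [set k | odd #|[set s in c | k \in f s]|].

Definition is_reference_map (K : family) (W : seq step)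
    (r : simplex -> family) : Prop :=
  [/\ forall s, s \in K -> r s \subset [set k in critical W | #|k| == #|s|],
      forall n, n \in critical W -> r n = [set n] &
      forall t, t \in upper_regular W ->
        r t = set0 /\ linext r (bdry K t) = set0].

Definition is_coreference_map (K : family) (W : seq step)
    (c : simplex -> family) : Prop :=
  [/\ forall s, s \in K -> c s \subset [set k in critical W | #|k| == #|s|],
      forall n, n \in critical W -> c n = [set n] &
      forall s, s \in lower_regular W ->
        c s = set0 /\ linext c (cobdry K s) = set0].

(* extension-type map: for critical k, ext(k) = {n in K | k in g n},
   extended linearly; with g = coreference it is the extension map,
   with g = reference it is the coextension map. *)
Definition ext (K : family) (g : simplex -> family) (c : family) : family :=
  [set n in K | odd #|[set k in c | k \in g n]|].

(* image of ext on hat W[p]:  O-bar[p] (g = coref) / O-underline[p] (g = ref) *)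
Definition ext_image (K : family) (W : seq step) (g : simplex -> family)
    (p : nat) : {set family} :=
  [set ext K g c | c in powerset (crit_p W p)].

Definition iso_with_inverse (Wp : family) (O : {set family})
    (phi psi : family -> family) : Prop :=
  [/\ (forall c1 c2 : family, c1 \subset Wp -> c2 \subset Wp ->
         phi (symdiff c1 c2) = symdiff (phi c1) (phi c2)),
      (forall c : family, c \subset Wp -> phi c \in O),
      (forall c : family, c \subset Wp -> psi (phi c) = c) &
      (forall d, d \in O -> psi d \subset Wp /\ phi (psi d) = d)].
End Defs.

From mathcomp Require Import all_boot.

(* Evaluating [linext h (ext K g c)] at a critical k counts, modulo 2, the
   simplices n with n in [ext K g c] and k in [h n].  A critical n has
   [g n = h n = [set n]], so it counts exactly when n = k lies in c.  Every
   other simplex of K is lower regular, where the coreference map vanishes, or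
   upper regular, where the reference map vanishes; so with {g, h} the
   reference and coreference maps in either order it counts for nothing.
   Hence [linext h] is a left inverse of the linear map [ext K g] on chains of
   critical simplices, which gives both isomorphisms. *)

Section MorseChains.
Variable V : finType.
Implicit Types (K c A B C : {set {set V}}) (W : seq (step V)).

Lemma setI_symdiff A B C : symdiff A B :&: C = symdiff (A :&: C) (B :&: C).
Proof.
by apply/setP=> x; rewrite !inE; case: (x \in A); case: (x \in B); case: (x \in C).
Qed.

Lemma odd_card_symdiff A B : odd #|symdiff A B| = odd #|A| (+) odd #|B|.
Proof.
have disjointAB : (A :\: B) :&: (B :\: A) = set0.
  by apply/setP=> x; rewrite !inE; case: (x \in A); case: (x \in B).
rewrite /symdiff cardsU disjointAB cards0 subn0.
rewrite -(cardsID B A) -(cardsID A B) setIC !oddD.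
by case: (odd _); case: (odd _); case: (odd _).
Qed.

Lemma card_setI1 c k : #|c :&: [set k]| = (k \in c : nat).
Proof.
have [kc | kNc] := boolP (k \in c).
  by rewrite (setIidPr _) ?cards1 ?sub1set.
apply/eqP; rewrite cards_eq0; apply/eqP/setP=> x; rewrite !inE.
by case: (eqVneq x k) => [->|]; rewrite ?andbT ?andbF ?(negbTE kNc).
Qed.

Lemma in_ext K (g : {set V} -> {set {set V}}) c n :
  (n \in ext K g c) = (n \in K) && odd #|c :&: g n|.
Proof.
by rewrite inE; congr (_ && odd #|_|); apply/setP=> k; rewrite !inE.
Qed.

Lemma ext_symdiff K (g : {set V} -> {set {set V}}) c1 c2 :
  ext K g (symdiff c1 c2) = symdiff (ext K g c1) (ext K g c2).
Proof.
apply/setP=> n; rewrite /symdiff !(inE, in_ext) -/(symdiff _ _).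
by rewrite setI_symdiff odd_card_symdiff; case: (n \in K); case: (odd _); case: (odd _).
Qed.

Lemma mem_Kof_cases W n : n \in Kof W ->
  [|| n \in critical W, n \in lower_regular W | n \in upper_regular W].
Proof.
rewrite /Kof /critical /lower_regular /upper_regular.
elim: W => [|[m|s t] W IH]; rewrite ?big_nil ?inE // !big_cons !inE.
- by case/orP=> [->//|/IH]; case/or3P=> ->; rewrite ?orbT.
- by case/orP=> [/orP[]->|/IH]; rewrite ?orbT //; case/or3P=> ->; rewrite ?orbT.
Qed.

Lemma critical_subset_Kof W : critical W \subset Kof W.
Proof.
apply/subsetP; rewrite /Kof /critical.
elim: W => [|[m|s t] W IH] n; rewrite ?big_nil ?inE // !big_cons !inE.
- by case/orP=> [->//|/IH ->]; rewrite orbT.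
- by move/IH=> ->; rewrite orbT.
Qed.

Lemma crit_p_subset W p : crit_p W p \subset critical W.
Proof. by apply/subsetP=> n; rewrite inE => /andP[]. Qed.

Section DualMaps.
Variables (K : {set {set V}}) (W : seq (step V)) (g h : {set V} -> {set {set V}}).
Hypothesis critical_subK : critical W \subset K.
Hypothesis g_critical : forall n, n \in critical W -> g n = [set n].
Hypothesis h_critical : forall n, n \in critical W -> h n = [set n].
Hypothesis gh_regular :
  forall n, n \in K -> n \notin critical W -> g n = set0 \/ h n = set0.

Lemma mem_ext_dual c k n : c \subset critical W ->
  (n \in ext K g c) && (k \in h n) = (n \in c) && (n == k).
Proof.
move=> cW; rewrite in_ext.
have [nW | nNW] := boolP (n \in critical W).
  rewrite g_critical // h_critical // (subsetP critical_subK) // inE eq_sym.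
  by rewrite card_setI1; case: (n \in c).
have -> : (n \in c) = false by apply/negbTE; apply: contra nNW; apply: (subsetP cW).
case: (boolP (n \in K)) => //= nK.
by case: (gh_regular _ nK nNW) => ->; rewrite ?setI0 ?cards0 ?inE ?andbF.
Qed.

Lemma linext_ext c : c \subset critical W -> linext h (ext K g c) = c.
Proof.
move=> cW; apply/setP=> k; rewrite inE.
have -> : [set n in ext K g c | k \in h n] = c :&: [set k].
  by apply/setP=> n; rewrite inE mem_ext_dual // !inE.
by rewrite card_setI1; case: (k \in c).
Qed.

Lemma ext_iso_with_inverse p :
  iso_with_inverse (crit_p W p) (ext_image K W g p) (ext K g) (linext h).
Proof.
have crit_sub c : c \subset crit_p W p -> c \subset critical W.
  by move/subset_trans; apply; apply: crit_p_subset.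
split=> [c1 c2 _ _ | c cW | c cW | d /imsetP[c]].
- exact: ext_symdiff.
- by apply/imsetP; exists c; rewrite ?powersetE.
- by rewrite linext_ext ?crit_sub.
- by rewrite powersetE => cW ->; rewrite linext_ext ?crit_sub.
Qed.

End DualMaps.
End MorseChains.

Theorem proposition19 (V : finType) (K : {set {set V}}) (W : seq (step V))
    (rf cf : {set V} -> {set {set V}}) (p : nat) :
  morse_seq K W ->
  is_reference_map K W rf ->
  is_coreference_map K W cf ->
  iso_with_inverse (crit_p W p) (ext_image K W cf p) (ext K cf) (linext rf) /\
  iso_with_inverse (crit_p W p) (ext_image K W rf p) (ext K rf) (linext cf).
Proof.
move=> [_ KofW] [_ rf_critical rf_upper] [_ cf_critical cf_lower].
have critical_subK : critical W \subset K by rewrite -KofW critical_subset_Kof.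
have regular n : n \in K -> n \notin critical W -> cf n = set0 \/ rf n = set0.
  rewrite -KofW => /mem_Kof_cases/or3P[-> // | /cf_lower[-> _] | /rf_upper[-> _]] _.
  - by left.
  - by right.
split; apply: ext_iso_with_inverse => // n nK nNW.
exact/or_comm/regular.
Qed.
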